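(* Let $I,J$ be countable sets with nested finite subsets $I_1\subset I_2\subset\cdots$, $\bigcup_nI_n=I$, and $J_1\subset J_2\subset\cdots$, $\bigcup_nJ_n=J$, and let $a:I\to J$ be a bijection with $$\lim_{n\to\infty}\frac{|a(I_n)\cap J_n|}{|I_n|}=\lim_{n\to\infty}\frac{|J_n|}{|I_n|}=1.$$ Then for every bounded operator $T\in B(\ell^2(J))$ and every $p\in\mathbb{N}^*$, $$p\text{-}\lim_n\frac{1}{|J_n|}\sum_{j\in J_n}T_{j,j}=p\text{-}\lim_n\frac{1}{|I_n|}\sum_{i\in I_n}T_{a(i),a(i)},$$ i.e. $\mu(T)=\mu(a_*(T))$.
   Context: $\{\epsilon_j\}_{j\in J}$ and $\{\delta_i\}_{i\in I}$ are the canonical orthonormal bases of $\ell^2(J)$ and $\ell^2(I)$; $T_{j,k}=\langle T\epsilon_j,\epsilon_k\rangle$. $a_*(T)\in B(\ell^2(I))$ is defined by $\langle a_*(T)\delta_{i_1},\delta_{i_2}\rangle=\langle T\epsilon_{a(i_1)},\epsilon_{a(i_2)}\rangle$. $\mathbb{N}^*$ is the set of free ultrafilters on $\mathbb{N}$, and for a bounded complex sequence $\mathbf{x}$, $p\text{-}\lim\mathbf{x}=c$ iff for every $\varepsilon>0$ the set $\{n:|x_n-c|<\varepsilon\}$ belongs to $p$. For an operator $T$ on $\ell^2(J)$ (resp. $\ell^2(I)$) the ultrafilter measure $\mu(T)(p)$ is $p\text{-}\lim_n\frac1{|J_n|}\sum_{j\in J_n}T_{j,j}$ (resp. with $I_n$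 and the basis $\delta_i$). *)

From HB Require Import structures.
From mathcomp Require Import all_boot all_order all_algebra.
From mathcomp Require Import finmap.
From mathcomp Require Import complex.
From mathcomp Require Import boolp classical_sets cardinality reals topology normedtype sequences.
Set Implicit Arguments. Unset Strict Implicit. Unset Printing Implicit Defensive.
Import Order.TTheory GRing.Theory Num.Theory.
Local Open Scope ring_scope.
Local Open Scope classical_set_scope.
Local Open Scope complex_scope.

Definition free_ultrafilter (p : set (set nat)) : Prop :=
  [/\ p setT, ~ p set0,
      (forall A B : set nat, p A -> p B -> p (A `&` B)),
      (forall A B : set nat, A `<=` B -> p A -> p B) &
      (forall A : set nat, p A \/ p (~` A))] /\
  (forall A : set nat, finite_set A -> ~ p A).

Definition is_plim (R : realType) (p : set (set nat)) (x : nat -> R[i]) (c : R[i]) : Prop :=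
  forall eps : R[i], 0 < eps -> p [set n | `|x n - c| < eps].

(* A matrix (T_{j,k})_{j,k in J}, T_{j,k} = <T e_j, e_k>, defines a bounded operator on
   l^2(J): the sesquilinear form (x,y) |-> sum_{j,k} T_{j,k} x_j conj(y_k) on finitely
   supported vectors is bounded by M ||x|| ||y||. *)
Definition bounded_op_matrix (R : realType) (J : countType) (T : J -> J -> R[i]) : Prop :=
  exists M : R[i], 0 <= M /\
    forall (F : {fset J}) (x y : J -> R[i]),
      `| \sum_(j <- F) \sum_(k <- F) T j k * x j * (y k)^* | ^+ 2
        <= M ^+ 2 * (\sum_(j <- F) `|x j| ^+ 2) * (\sum_(k <- F) `|y k| ^+ 2).

From HB Require Import structures.
From mathcomp Require Import all_boot all_order all_algebra.
From mathcomp Require Import finmap complex.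
From mathcomp Require Import boolp classical_sets cardinality reals topology normedtype sequences.
From mathcomp Require Import ring lra.
Import Order.TTheory GRing.Theory Num.Theory.
Import numFieldNormedType.Exports.
Local Open Scope ring_scope.
Local Open Scope classical_set_scope.

(* The diagonal of T is bounded, say by m, so the averages over J_n are bounded and
   have a p-limit: a bounded real sequence x has p-limit sup {t | {n | t <= x n} ∈ p}.
   Splitting both averages over a(I_n) ∩ J_n and the two set differences bounds
   their difference by 2 m (2 - g/|I_n| - g/|J_n|) with g = |a(I_n) ∩ J_n|, which
   tends to 0 by the two density hypotheses; hence the averages over I_n have the
   same p-limit. *)

(* [is_plim] is the case [F := R[i]]; the generality is used for real sequences. *)
Definition plim_to {F : numDomainType} (p : set (set nat)) (x : nat -> F) (c : F) :=
  forall eps : F, 0 < eps -> p [set n | `|x n - c| < eps].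

Section FreeUltrafilter.
Context {p : set (set nat)} (Hp : free_ultrafilter p).

Lemma uf_setT : p setT.
Proof. by case: Hp => -[]. Qed.

Lemma uf_set0 : ~ p set0.
Proof. by case: Hp => -[]. Qed.

Lemma uf_setI {A B : set nat} : p A -> p B -> p (A `&` B).
Proof. by case: Hp => -[_ _ pI _ _] _; apply: pI. Qed.

Lemma uf_sub {A B : set nat} : A `<=` B -> p A -> p B.
Proof. by case: Hp => -[_ _ _ pS _] _; apply: pS. Qed.

Lemma uf_setC {A : set nat} : ~ p A -> p (~` A).
Proof. by case: Hp => -[_ _ _ _ pC] _; case: (pC A). Qed.

Lemma uf_near {P : nat -> Prop} : (\forall n \near \oo, P n) -> p [set n | P n].
Proof.
case=> N _ PN; have : ~ p `I_N by case: Hp => _; apply; apply: finite_II.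
by move/uf_setC; apply: uf_sub => n /= Nn; apply: PN; rewrite /= leqNgt; apply/negP.
Qed.

Lemma plim_to_real_exists (R : realType) (x : nat -> R) (K : R) :
  (forall n, `|x n| <= K) -> exists c, plim_to p x c.
Proof.
move=> xK; have xK' n : - K <= x n <= K by rewrite -ler_norml.
pose S := [set t : R | p [set n | t <= x n]].
have supS : has_sup S.
  split; first by exists (- K); apply: uf_sub uf_setT => n _; case/andP: (xK' n).
  exists K => t St; rewrite leNgt; apply/negP => Kt; apply: uf_set0.
  by apply: uf_sub St => n /= tx; case/andP: (xK' n) => _; lra.
exists (sup S) => e e0.
have [t St te] := sup_adherent e0 supS.
have notS : ~ p [set n | sup S + e / 2 <= x n] by move/(sup_upper_bound supS) => /=; lra.
apply: uf_sub (uf_setI St (uf_setC notS)) => n /= [tx /negP]; rewrite -ltNge => xs.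
by rewrite ltr_norml; apply/andP; split; lra.
Qed.

Lemma plim_to_eventually_close {F : numFieldType} {x y : nat -> F} {c : F} :
  plim_to p x c -> (forall e, 0 < e -> \forall n \near \oo, `|y n - x n| < e) ->
  plim_to p y c.
Proof.
move=> xc yx e e0; have e2 : 0 < e / 2 by rewrite divr_gt0.
have := uf_setI (xc _ e2) (uf_near (yx _ e2)); apply: uf_sub => n /= [xn yn].
by rewrite (splitr e); apply: le_lt_trans (ler_distD (x n) _ _) _; rewrite ltrD.
Qed.

End FreeUltrafilter.

Lemma big_fsetI_setD {V : nmodType} {X : choiceType} (A B : {fset X}) (G : X -> V) :
  \sum_(x <- A) G x = \sum_(x <- (A `&` B)%fset) G x + \sum_(x <- (A `\` B)%fset) G x.
Proof.
by rewrite (big_fsetID _ (mem B)); congr (_ + _); apply: eq_fbigl => x; rewrite !inE andbC.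
Qed.

Definition fset_avg {F : numFieldType} {X : choiceType} (S : {fset X}) (f : X -> F) : F :=
  (#|` S|%:R)^-1 * \sum_(x <- S) f x.

Lemma fset_avg_imfset (F : numFieldType) (I J : choiceType) (a : I -> J) (S : {fset I})
    (f : J -> F) :
  injective a -> fset_avg [fset a i | i in S]%fset f = fset_avg S (fun i => f (a i)).
Proof.
move=> a_inj; rewrite /fset_avg card_imfset //= big_imfset //=.
by move=> i j _ _; apply: a_inj.
Qed.

Definition overlap_defect {F : numFieldType} {X : choiceType} (A B : {fset X}) : F :=
  2 - #|` (A `&` B)%fset|%:R / #|` A|%:R - #|` (A `&` B)%fset|%:R / #|` B|%:R.

Section FsetAverageBounds.
Context {F : numFieldType} {X : choiceType} {K : F} {f : X -> F}.
Hypotheses (K_ge0 : 0 <= K) (fK : forall x, `|f x| <= K).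

Lemma norm_sum_le_card (S : {fset X}) : `|\sum_(x <- S) f x| <= K * #|` S|%:R.
Proof.
apply: le_trans (ler_norm_sum _ _ _) _.
by rewrite card_fset_sum1 natr_sum mulr_sumr; apply: ler_sum => x _; rewrite mulr1.
Qed.

Lemma norm_fset_avg_le (S : {fset X}) : `|fset_avg S f| <= K.
Proof.
rewrite /fset_avg normrM normfV normr_nat.
have [->|S0] := eqVneq #|` S| 0%N; first by rewrite invr0 mul0r.
by rewrite mulrC ler_pdivrMr ?ltr0n ?lt0n // norm_sum_le_card.
Qed.

Lemma overlap_ratio_le1 (A B : {fset X}) : #|` (A `&` B)%fset|%:R / #|` A|%:R <= 1 :> F.
Proof.
have [->|A0] := eqVneq #|` A| 0%N; first by rewrite invr0 mulr0.
by rewrite ler_pdivrMr ?ltr0n ?lt0n // mul1r ler_nat fsubset_leq_card ?fsubsetIl.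
Qed.

Lemma norm_avg_setD_le (A B : {fset X}) :
  `|(#|` A|%:R)^-1 * \sum_(x <- (A `\` B)%fset) f x|
    <= K * (1 - #|` (A `&` B)%fset|%:R / #|` A|%:R).
Proof.
have [A0|A0] := eqVneq #|` A| 0%N.
  by rewrite A0 invr0 mul0r normr0 mulr0 subr0 mulr1.
rewrite normrM normfV normr_nat mulrC ler_pdivrMr ?ltr0n ?lt0n //.
apply: le_trans (norm_sum_le_card _) _; rewrite -mulrA ler_wpM2l //.
rewrite mulrBl mul1r mulfVK ?pnatr_eq0 // -(cardfsID B A) natrD.
by rewrite addrC addKr.
Qed.

Lemma fset_avg_dist_le (A B : {fset X}) :
  `|fset_avg A f - fset_avg B f| <= 2 * K * overlap_defect A B.
Proof.
set g := #|` (A `&` B)%fset|%:R : F.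
set a := #|` A|%:R : F; set b := #|` B|%:R : F.
have ga1 : 0 <= 1 - g / a by rewrite subr_ge0 overlap_ratio_le1.
have gb1 : 0 <= 1 - g / b by rewrite subr_ge0 /g fsetIC overlap_ratio_le1.
have -> : fset_avg A f - fset_avg B f =
    (a^-1 - b^-1) * \sum_(x <- (A `&` B)%fset) f x
    + a^-1 * \sum_(x <- (A `\` B)%fset) f x - b^-1 * \sum_(x <- (B `\` A)%fset) f x.
  by rewrite /fset_avg (big_fsetI_setD A B) (big_fsetI_setD B A) (fsetIC B A); ring.
have common : `|(a^-1 - b^-1) * \sum_(x <- (A `&` B)%fset) f x|
    <= K * ((1 - g / a) + (1 - g / b)).
  rewrite normrM mulrC.
  apply: le_trans (ler_wpM2r (normr_ge0 _) (norm_sum_le_card _)) _.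
  rewrite -/g -mulrA ler_wpM2l //.
  have -> : g * `|a^-1 - b^-1| = `|(1 - g / b) - (1 - g / a)|.
    by rewrite -{1}(@ger0_norm _ g) ?ler0n // -normrM; congr `|_|; ring.
  by apply: le_trans (ler_normB _ _) _; rewrite !ger0_norm // addrC.
have := norm_avg_setD_le A B; have := norm_avg_setD_le B A; rewrite fsetIC -/g -/a -/b.
move=> BA AB; apply: le_trans (ler_normB _ _) _; apply: le_trans (lerD (ler_normD _ _) BA) _.
apply: le_trans (lerD (lerD common AB) (lexx _)) _.
by rewrite /overlap_defect -/g -/a -/b le_eqVlt; apply/orP; left; apply/eqP; ring.
Qed.

End FsetAverageBounds.

Lemma overlap_defect_cvg0 (R : realType) (X : choiceType) (A B : nat -> {fset X}) :
  ((fun n => #|` (A n `&` B n)%fset|%:R / #|` A n|%:R) : nat -> R) @ \oo --> (1 : R) ->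
  ((fun n => #|` B n|%:R / #|` A n|%:R) : nat -> R) @ \oo --> (1 : R) ->
  ((fun n => overlap_defect (A n) (B n)) : nat -> R) @ \oo --> (0 : R).
Proof.
set u := fun n => _ / _; set v := fun n => _ / _ => u1 v1.
have -> : (fun n => overlap_defect (A n) (B n)) = (fun n => 2 - u n - u n / v n) :> (nat -> R).
  apply/funext => n; rewrite /overlap_defect /u /v; congr (_ - _).
  have [A0|A0] := eqVneq #|` A n| 0%N.
    have : #|` (A n `&` B n)%fset| = 0%N.
      by apply/eqP; rewrite -leqn0 -A0 fsubset_leq_card ?fsubsetIl.
    by move=> ->; rewrite !mul0r.
  by rewrite invf_div mulrA divfK ?pnatr_eq0.
have -> : (0 : R) = 2 - 1 - 1 / 1 by rewrite divr1; lra.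
apply: cvgB; first by apply: cvgB => //; exact: cvg_cst.
by apply: cvgM => //; apply: cvgV => //; exact: oner_neq0.
Qed.

Local Open Scope complex_scope.

Section RealComplex.
Context {R : realType}.

Lemma normc_real (k : R) : `|k%:C| = `|k|%:C.
Proof. by rewrite normc_def /= expr0n addr0 sqrtr_sqr. Qed.

Lemma normc_i : `|'i%C : R[i]| = 1.
Proof. by rewrite normc_def /= expr0n add0r expr1n sqrtr1. Qed.

Lemma normc_Re_le (z : R[i]) : `|complex.Re z|%:C <= `|z|.
Proof.
rewrite normc_def lecR -sqrtr_sqr ler_sqrt ?lerDl ?sqr_ge0 //.
by rewrite addr_ge0 ?sqr_ge0.
Qed.

Lemma normc_Im_le (z : R[i]) : `|complex.Im z|%:C <= `|z|.
Proof.
rewrite normc_def lecR -sqrtr_sqr ler_sqrt ?lerDr ?sqr_ge0 //.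
by rewrite addr_ge0 ?sqr_ge0.
Qed.

Lemma positive_complexE (eps : R[i]) : 0 < eps -> exists2 e : R, 0 < e & eps = e%:C.
Proof. by case: eps => e b; rewrite ltcE /= => /andP[/eqP -> e0]; exists e. Qed.

Lemma plim_to_complex_exists {p : set (set nat)} (Hp : free_ultrafilter p)
    {x : nat -> R[i]} {K : R} :
  (forall n, `|x n| <= K%:C) -> exists c, plim_to p x c.
Proof.
move=> xK.
have [cr hr] : exists c, plim_to p (fun n => complex.Re (x n)) c.
  apply: (@plim_to_real_exists _ Hp _ _ K) => n.
  by rewrite -lecR (le_trans (normc_Re_le _)).
have [ci hi] : exists c, plim_to p (fun n => complex.Im (x n)) c.
  apply: (@plim_to_real_exists _ Hp _ _ K) => n.
  by rewrite -lecR (le_trans (normc_Im_le _)).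
exists (cr%:C + 'i%C * ci%:C) => _ /positive_complexE[e e0 ->].
have e2 : 0 < e / 2 by lra.
apply: (uf_sub Hp) (uf_setI Hp (hr _ e2) (hi _ e2)) => n /= [rn iN].
have -> : x n - (cr%:C + 'i%C * ci%:C) =
    (complex.Re (x n) - cr)%:C + 'i%C * (complex.Im (x n) - ci)%:C.
  by rewrite {1}[x n]complexE !rmorphB /=; ring.
apply: le_lt_trans (ler_normD _ _) _.
rewrite normrM normc_i mul1r !normc_real -rmorphD ltcR.
lra.
Qed.

Lemma real_complex_near_lt (r : nat -> R) :
  r @ \oo --> 0 -> forall eps : R[i], 0 < eps -> \forall n \near \oo, (r n)%:C < eps.
Proof.
move=> r0 _ /positive_complexE[e e0 ->].
by apply: filterS (cvgr_lt _ r0 _ e0) => n; rewrite ltcR.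
Qed.

Lemma real_complex_overlap_defect (X : choiceType) (A B : {fset X}) :
  (overlap_defect A B : R)%:C = overlap_defect A B.
Proof. by rewrite /overlap_defect !(rmorphB, rmorphM, fmorphV, rmorph_nat). Qed.

Lemma bounded_op_matrix_diag {J : countType} {T : J -> J -> R[i]} :
  bounded_op_matrix T -> exists2 m : R, 0 <= m & forall j, `|T j j| <= m%:C.
Proof.
case=> -[m b] [+ TM]; rewrite lecE /= => /andP[/eqP b0 m0]; subst b.
exists m => // j; have := TM [fset j]%fset (fun _ => 1) (fun _ => 1).
rewrite !big_seq_fset1 /= conjC1 !mulr1 normr1 expr1n !mulr1.
by move=> TM2; rewrite -(@ler_pXn2r _ 2) ?nnegrE ?normr_ge0 ?ler0c.
Qed.

End RealComplex.

Theorem proposition8p1 (R : realType) (I J : countType)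
  (In : nat -> {fset I}) (Jn : nat -> {fset J}) (a : I -> J)
  (HInest : forall n, (In n `<=` In n.+1)%fset)
  (HIcov : forall i : I, exists n, i \in In n)
  (HJnest : forall n, (Jn n `<=` Jn n.+1)%fset)
  (HJcov : forall j : J, exists n, j \in Jn n)
  (Ha : bijective a)
  (Hlim1 : ((fun n => #|` ([fset a i | i in In n] `&` Jn n)%fset |%:R / #|` In n |%:R) : nat -> R)
             @ \oo --> (1 : R))
  (Hlim2 : ((fun n => #|` Jn n |%:R / #|` In n |%:R) : nat -> R) @ \oo --> (1 : R))
  (T : J -> J -> R[i]) (HT : bounded_op_matrix T)
  (p : set (set nat)) (Hp : free_ultrafilter p) :
  exists c : R[i],
    is_plim p (fun n => (#|` Jn n |%:R)^-1 * \sum_(j <- Jn n) T j j) c /\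
    is_plim p (fun n => (#|` In n |%:R)^-1 * \sum_(i <- In n) T (a i) (a i)) c.
Proof.
have a_inj := bij_inj Ha.
have [m m0 Tm] := bounded_op_matrix_diag HT.
have m0C : 0 <= m%:C by rewrite ler0c.
have [c Jc] := plim_to_complex_exists Hp (fun n => norm_fset_avg_le m0C Tm (Jn n)).
exists c; split; first exact: Jc.
apply: (plim_to_eventually_close Hp Jc) => eps eps0.
pose A n := [fset a i | i in In n]%fset.
have cardA n : #|` A n| = #|` In n| by rewrite card_imfset.
have defect0 : ((fun n => 2 * m * overlap_defect (A n) (Jn n)) : nat -> R) @ \oo --> (0 : R).
  rewrite -(mulr0 (2 * m)); apply: cvgM; first exact: cvg_cst.
  by apply: overlap_defect_cvg0; under eq_fun do rewrite cardA.
near=> n.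
have := fset_avg_dist_le m0C Tm (A n) (Jn n).
rewrite fset_avg_imfset // -real_complex_overlap_defect.
rewrite -(rmorph_nat (real_complex R) 2) -!rmorphM.
move/le_lt_trans; apply; near: n; exact: real_complex_near_lt.
Unshelve. all: by end_near.
Qed.
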